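(* Let $\mathcal{M}$ be a matroid on $[n]$, $J=J(\mathcal{M})$, and let $v$ be such that $\{v\}$ is independent in $\mathcal{M}$. Let $J\div v$ be the ideal generated by $G(J)-G(J(\mathcal{M}/v))$. Then $$G(J(\mathcal{M}/v))=\{N\in G(J): x_v\nmid N\}\quad\text{and}\quad G(J\div v)=\{N\in G(J):x_v\mid N\}.$$ Furthermore, for every independent set $A$ of $\mathcal{M}$, $G(J(\mathcal{M}/A))=\{N\in G(J):\operatorname{supp}N\cap A=\emptyset\}$.
   Context: $R=\mathbb{K}[x_1,\ldots,x_n]$, $\mathbb{K}$ a field. For a matroid $\mathcal{N}$ on $E\subseteq[n]$, $J(\mathcal{N})=\bigcap_{F\in\mathcal{B}(\mathcal{N})}(x_i:i\in F)$ formed in $\mathbb{K}[x_i:i\in E]$ and extended to $R$. $\mathcal{M}/A$ is the contraction by the independent set $A$ (matroid on $[n]-A$ whose independent sets are the $I$ with $I\cup A$ independent). $G(\cdot)$ denotes minimal monomial generators; $\operatorname{supp}N=\{i:x_i\mid N\}$. *)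

From HB Require Import structures.
From mathcomp Require Import all_boot all_algebra.
From mathcomp Require Import mpoly.
Set Implicit Arguments. Unset Strict Implicit. Unset Printing Implicit Defensive.
Import GRing.Theory.
Local Open Scope ring_scope.

Section Defs.
Variable n : nat.
Variable K : fieldType.
Local Notation R := {mpoly K[n]}.

Definition ideal_gen (S : R -> Prop) : R -> Prop :=
  fun p => exists l : seq (R * R),
    (forall q, q \in l -> S q.2) /\ p = \sum_(q <- l) q.1 * q.2.

Definition ideal_cap (I1 I2 : R -> Prop) : R -> Prop := fun p => I1 p /\ I2 p.

Definition var_ideal (F : {set 'I_n}) : R -> Prop :=
  ideal_gen (fun p => exists2 i, i \in F & p = 'X_i).

Definition is_matroid (E : {set 'I_n}) (ind : {set 'I_n} -> bool) : Prop :=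
  [/\ ind set0,
      (forall I : {set 'I_n}, ind I -> I \subset E),
      (forall I J : {set 'I_n}, ind J -> I \subset J -> ind I) &
      (forall I J : {set 'I_n}, ind I -> ind J -> (#|I| < #|J|)%N ->
          exists2 x, x \in J :\: I & ind (x |: I))].

Definition is_basis (ind : {set 'I_n} -> bool) (B : {set 'I_n}) : Prop :=
  ind B /\ forall I : {set 'I_n}, ind I -> B \subset I -> I = B.

Definition contr_ground (E A : {set 'I_n}) : {set 'I_n} := E :\: A.
Definition contr_ind (E : {set 'I_n}) (ind : {set 'I_n} -> bool) (A : {set 'I_n})
  : {set 'I_n} -> bool :=
  fun I => (I \subset E :\: A) && ind (I :|: A).

Definition Jmat (ind : {set 'I_n} -> bool) : R -> Prop :=
  fun p => forall F, is_basis ind F -> var_ideal F p.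

Definition mingens (I : R -> Prop) : 'X_{1..n} -> Prop :=
  fun m => I 'X_[m] /\ forall m', I 'X_[m'] -> (m' <= m)%MM -> m' = m.

Definition mon_ideal (S : 'X_{1..n} -> Prop) : R -> Prop :=
  ideal_gen (fun p => exists2 m, S m & p = 'X_[m]).

End Defs.

(* A monomial x^m lies in J(M) iff its support meets every basis of M.  The
   bases of M/A are the sets B - A for the bases B of M containing A, and any
   basis B can be exchanged for a basis containing A inside A ∪ B; hence x^m
   lies in J(M/A) iff x^m with the exponents on A erased lies in J(M).  So the
   minimal generators of J(M/A) are the minimal generators of J(M) avoiding A.
   Finally, any family of minimal generators is an antichain for divisibility,
   so it is exactly the set of minimal generators of the ideal it generates. *)

From HB Require Import structures.
From mathcomp Require Import all_boot all_algebra.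
From mathcomp Require Import mpoly.
Set Implicit Arguments. Unset Strict Implicit. Unset Printing Implicit Defensive.
Import GRing.Theory.

Lemma setDUK (T : finType) (A B : {set T}) : A \subset B -> (B :\: A) :|: A = B.
Proof.
by move=> AB; rewrite setDE setUIl [~: A :|: A]setUC setUCr setIT; apply/setUidPl.
Qed.

Section MonomialIdeals.
Variables (n : nat) (K : fieldType).
Local Notation R := {mpoly K[n]}.
Local Open Scope ring_scope.

Lemma lepm_anti (m1 m2 : 'X_{1..n}) : (m1 <= m2)%MM -> (m2 <= m1)%MM -> m1 = m2.
Proof.
move=> /mnm_lepP le12 /mnm_lepP le21; apply/mnmP => i.
by apply/anti_leq; rewrite le12 le21.
Qed.

Lemma mpolyX_inj : injective (fun m : 'X_{1..n} => 'X_[m] : R).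
Proof.
move=> m1 m2 /(congr1 (mcoeff m1)); rewrite !mcoeffX eqxx.
by case: eqP => // _ /eqP; rewrite oner_eq0.
Qed.

Lemma mcoeff_mulX_eq0 (p : R) (s m : 'X_{1..n}) :
  ~~ (s <= m)%MM -> (p * 'X_[s])@_m = 0.
Proof.
move=> nle_sm; rewrite mcoeffM big1 // => k /eqP m_eq; rewrite mcoeffX.
have [s_eq|] := eqP; last by rewrite mulr0.
by move: nle_sm; have -> : (s <= m)%MM by rewrite m_eq -s_eq lem_addl.
Qed.

(* The coefficient of x^m in a combination of monomials not dividing x^m is 0. *)
Lemma ideal_gen_mpolyX (S : R -> Prop) :
  (forall p, S p -> exists s, p = 'X_[s]) ->
  forall m, ideal_gen S 'X_[m] <-> exists2 s, S 'X_[s] & (s <= m)%MM.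
Proof.
move=> monS m; split=> [[l [Sl m_eq]] | [s Ss le_sm]]; last first.
  exists [:: ('X_[m - s], 'X_[s])]; split=> [q|]; first by rewrite inE => /eqP ->.
  by rewrite big_seq1 -mpolyXD submK.
suff [//|] : (exists2 s, S 'X_[s] & (s <= m)%MM) \/ (\sum_(q <- l) q.1 * q.2)@_m = 0.
  by rewrite -m_eq mcoeffX eqxx => /eqP; rewrite oner_eq0.
elim: l Sl {m_eq} => [|q l IHl] Sl; first by right; rewrite big_nil mcoeff0.
have Sq : S q.2 by apply: Sl; rewrite mem_head.
have [s q_eq] := monS _ Sq.
have [le_sm | nle_sm] := boolP (s <= m)%MM; first by left; exists s; rewrite -?q_eq.
have Sl' q' : q' \in l -> S q'.2 by move=> q'l; apply: Sl; rewrite inE q'l orbT.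
have [divides|sum_eq0] := IHl Sl'; first by left.
by right; rewrite big_cons mcoeffD sum_eq0 addr0 q_eq mcoeff_mulX_eq0.
Qed.

Lemma var_idealX (F : {set 'I_n}) m :
  var_ideal (K:=K) F 'X_[m] <-> exists2 i, i \in F & m i != 0%N.
Proof.
rewrite /var_ideal ideal_gen_mpolyX => [|_ [i _ ->]]; last by exists U_(i)%MM.
split=> [[s [i iF /mpolyX_inj s_eq] le_sm] | [i iF mi]].
  by exists i; rewrite // -lep1mP -s_eq.
by exists U_(i)%MM; [exists i | rewrite lep1mP].
Qed.

Lemma mon_idealX (S : 'X_{1..n} -> Prop) m :
  mon_ideal (K:=K) S 'X_[m] <-> exists2 s, S s & (s <= m)%MM.
Proof.
rewrite /mon_ideal ideal_gen_mpolyX => [|_ [s _ ->]]; last by exists s.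
split=> [[s [s' Ss' /mpolyX_inj ->]] | [s Ss le_sm]]; first by exists s'.
by exists s; first exists s.
Qed.

Lemma mingens_antichain (I : R -> Prop) s s' :
  mingens I s -> mingens I s' -> (s <= s')%MM -> s = s'.
Proof. by move=> [Is _] [_ min_s']; apply: min_s'. Qed.

Lemma mingens_mon_ideal (S : 'X_{1..n} -> Prop) :
  (forall s s', S s -> S s' -> (s <= s')%MM -> s = s') ->
  forall m, mingens (mon_ideal (K:=K) S) m <-> S m.
Proof.
move=> antiS m; split=> [[/mon_idealX [s Ss le_sm] min_m] | Sm].
  by rewrite -(min_m s) //; apply/mon_idealX; exists s; rewrite ?lepm_refl.
split=> [|m' /mon_idealX [s Ss le_sm'] le_m'm].
  by apply/mon_idealX; exists m; rewrite ?lepm_refl.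
have s_eq : s = m by apply: antiS => //; apply: lepm_trans le_sm' le_m'm.
by apply: lepm_anti; rewrite // -s_eq.
Qed.

End MonomialIdeals.

Section Bases.
Variables (n : nat) (E : {set 'I_n}) (ind : {set 'I_n} -> bool).
Hypothesis hM : is_matroid E ind.
Implicit Types A B F I : {set 'I_n}.

Lemma card_ind_le_basis B I : is_basis ind B -> ind I -> #|I| <= #|B|.
Proof.
case: hM => _ _ _ aug [indB maxB] indI; rewrite leqNgt; apply/negP => ltBI.
have [x /setDP [_ xNB] indxB] := aug B I indB indI ltBI.
by move: xNB; rewrite -(maxB _ indxB (subsetUr _ _)) setU11.
Qed.

Lemma ind_extend_basis A B : ind A -> is_basis ind B ->
  exists2 B', is_basis ind B' & A \subset B' /\ B' \subset A :|: B.
Proof.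
move=> indA basB; case: (hM) => _ _ _ aug.
pose P I := [&& ind I, A \subset I & I \subset A :|: B].
have PA : P A by rewrite /P indA subxx subsetUl.
case: (@arg_maxnP _ A P (fun I => #|I|) PA) => I /and3P [indI AI IAB] maxI.
have le_BI : #|B| <= #|I|.
  rewrite leqNgt; apply/negP => ltIB.
  have [x /setDP [xB xNI] indxI] := aug I B indI basB.1 ltIB.
  have : P (x |: I).
    rewrite /P indxI (subset_trans AI (subsetUr _ _)).
    by rewrite subUset sub1set !inE xB orbT.
  by move/maxI; rewrite cardsU1 xNI /= ltnn.
exists I => //; split=> // J indJ IJ; apply/eqP; rewrite eq_sym eqEcard IJ.
exact: leq_trans (card_ind_le_basis basB indJ) le_BI.
Qed.

Lemma is_basis_contr_setD A B : is_basis ind B -> A \subset B ->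
  is_basis (contr_ind E ind A) (B :\: A).
Proof.
case: hM => _ subE _ _ [indB maxB] AB.
split=> [|I /andP [IEA indIA] BAI].
  by rewrite /contr_ind setDUK // indB setSD ?subE.
have IA_eq : I :|: A = B by apply: maxB; rewrite // -{1}(setDUK AB) setSU.
apply/setP => x; rewrite -IA_eq !inE.
have [xA|] := boolP (x \in A); last by rewrite orbF.
apply/negbTE; apply: contraL xA => xI.
by have := subsetP IEA x xI; rewrite inE => /andP [].
Qed.

Lemma is_basis_contr_setU A F : is_basis (contr_ind E ind A) F ->
  is_basis ind (F :|: A).
Proof.
case: hM => _ subE _ _ [/andP [FEA indFA] maxF]; split=> // J indJ FAJ.
have AJ : A \subset J := subset_trans (subsetUr _ _) FAJ.
have indJA : contr_ind E ind A (J :\: A).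
  by rewrite /contr_ind setDUK // indJ setSD ?subE.
rewrite -(setDUK AJ) -(maxF _ indJA) //; apply/subsetP => x xF.
have := subsetP FEA x xF; rewrite !inE => /andP [-> _].
by rewrite (subsetP FAJ) ?inE ?xF.
Qed.

End Bases.

Section Transversals.
Variables (n : nat) (K : fieldType).
Implicit Types (E A : {set 'I_n}) (ind : {set 'I_n} -> bool) (m : 'X_{1..n}).

Definition meets_bases (ind : {set 'I_n} -> bool) (m : 'X_{1..n}) :=
  forall B, is_basis ind B -> exists2 i, i \in B & m i != 0%N.

Lemma JmatX ind m : Jmat (K:=K) ind 'X_[m] <-> meets_bases ind m.
Proof. by split=> J_m B basB; apply/var_idealX; apply: J_m. Qed.

Lemma mingens_JmatP ind m :
  mingens (Jmat (K:=K) ind) m <->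
  meets_bases ind m /\ forall m', meets_bases ind m' -> (m' <= m)%MM -> m' = m.
Proof.
split=> [[/JmatX meets_m min_m] | [meets_m min_m]].
  by split=> // m' /JmatX; apply: min_m.
by split=> [|m' /JmatX]; [apply/JmatX | apply: min_m].
Qed.

Definition mnm_erase (A : {set 'I_n}) (m : 'X_{1..n}) : 'X_{1..n} :=
  [multinom if i \in A then 0%N else m i | i < n].

Lemma mnm_eraseE A m i : mnm_erase A m i = if i \in A then 0%N else m i.
Proof. exact: mnmE. Qed.

Lemma lepm_erase A m : (mnm_erase A m <= m)%MM.
Proof. by apply/mnm_lepP => i; rewrite mnm_eraseE; case: ifP. Qed.

Lemma mnm_erase_id A m : {in A, forall i, m i = 0%N} -> mnm_erase A m = m.
Proof. by move=> mA; apply/mnmP => i; rewrite mnm_eraseE; case: ifPn => // /mA. Qed.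

Lemma mnm_eraseK A m : mnm_erase A (mnm_erase A m) = mnm_erase A m.
Proof. by apply: mnm_erase_id => i iA; rewrite mnm_eraseE iA. Qed.

Lemma meets_bases_contr E ind A m : is_matroid E ind -> ind A ->
  meets_bases (contr_ind E ind A) m <-> meets_bases ind (mnm_erase A m).
Proof.
move=> hM indA; split=> [meets_m B basB | meets_m F basF].
  have [B' basB' [AB' B'AB]] := ind_extend_basis hM indA basB.
  have [i] := meets_m _ (is_basis_contr_setD hM basB' AB').
  rewrite inE => /andP [iNA iB'] mi.
  exists i; last by rewrite mnm_eraseE (negbTE iNA).
  by move: (subsetP B'AB i iB'); rewrite inE (negbTE iNA).
have [i] := meets_m _ (is_basis_contr_setU hM basF).
rewrite inE mnm_eraseE => /orP [iF | iA]; last by rewrite iA.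
by case: ifP => // _ mi; exists i.
Qed.

(* Erasing the exponents on A keeps a monomial of J(M/A) in J(M/A), so a
   minimal one already avoids A. *)
Lemma mingens_Jmat_contr E ind A m : is_matroid E ind -> ind A ->
  mingens (Jmat (K:=K) (contr_ind E ind A)) m <->
  mingens (Jmat (K:=K) ind) m /\ {in A, forall i, m i = 0%N}.
Proof.
move=> hM indA; rewrite !mingens_JmatP.
have contrE := meets_bases_contr _ hM indA.
split=> [[meets_m min_m] | [[meets_m min_m] mA]].
  have erase_eq : mnm_erase A m = m.
    by apply: min_m; rewrite ?lepm_erase // contrE mnm_eraseK -contrE.
  have mA : {in A, forall i, m i = 0%N}.
    by move=> i iA; rewrite -erase_eq mnm_eraseE iA.
  split=> //; split=> [|m' meets_m' le_m'm]; first by rewrite -erase_eq -contrE.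
  apply: min_m => //; rewrite contrE mnm_erase_id // => i iA.
  by apply/eqP; rewrite -leqn0 -(mA i iA); apply/mnm_lepP.
split=> [|m' /contrE meets_m' le_m'm]; first by rewrite contrE mnm_erase_id.
have erase_eq : mnm_erase A m' = m.
  by apply: min_m => //; apply: lepm_trans (lepm_erase A m') le_m'm.
by apply: lepm_anti; rewrite // -{1}erase_eq lepm_erase.
Qed.

End Transversals.

Theorem corollary2p19 (n : nat) (K : fieldType) (ind : {set 'I_n} -> bool)
  (hM : is_matroid setT ind) (v : 'I_n) (hv : ind [set v]) :
  let J := Jmat (K:=K) ind in
  let Jv := Jmat (K:=K) (contr_ind setT ind [set v]) in
  let Jdiv := mon_ideal (K:=K) (fun m => mingens J m /\ ~ mingens Jv m) in
  (forall m, mingens Jv m <-> mingens J m /\ m v = 0%N) /\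
  (forall m, mingens Jdiv m <-> mingens J m /\ (0 < m v)%N) /\
  (forall A : {set 'I_n}, ind A ->
     forall m, mingens (Jmat (K:=K) (contr_ind setT ind A)) m <->
               mingens J m /\ (forall i, i \in A -> m i = 0%N)).
Proof.
move=> J Jv Jdiv.
have contr_v m : mingens Jv m <-> mingens J m /\ m v = 0%N.
  rewrite mingens_Jmat_contr //; split=> [[J_m mv] | [J_m mv]]; split=> //.
    by apply: mv; rewrite set11.
  by move=> i; rewrite inE => /eqP ->.
split=> //; split=> [m|A indA m]; last exact: mingens_Jmat_contr.
rewrite mingens_mon_ideal => [|s s' [J_s _] [J_s' _]]; last first.
  exact: mingens_antichain J_s J_s'.
rewrite contr_v lt0n; split=> [[J_m NJv_m] | [J_m /eqP mv]]; split=> //.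
  by apply/eqP => mv; apply: NJv_m.
by case=> _ /mv.
Qed.
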